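(* Let $X$ be a smooth projective toric variety with lattice of one-parameter subgroups $N$, and let $p_1,p_2\in X$ be two distinct points. Then there exists $v\in N$ such that the limits $$q_1=\lim_{t\to0}t^v\cdot p_1,\qquad q_2=\lim_{t\to0}t^v\cdot p_2$$ are two distinct points each of which is either torus-invariant or lies on a torus-invariant curve.
   Context: For $v\in N$, $t\mapsto t^v$ denotes the corresponding one-parameter subgroup of the torus acting on $X$. *)

From HB Require Import structures.
From mathcomp Require Import all_boot all_order all_algebra.
From mathcomp Require Import finmap.
Set Implicit Arguments. Unset Strict Implicit. Unset Printing Implicit Defensive.
Import Order.TTheory GRing.Theory Num.Theory.
Local Open Scope ring_scope.
Local Open Scope fset_scope.

(* N = M = Z^n, both represented by row vectors of integers. *)
Definition lat (n : nat) := 'rV[int]_n.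

Definition pair n (m v : lat n) : int := \sum_(i < n) m ord0 i * v ord0 i.

(* a cone is given by its (finite) set of ray generators *)
Definition cone n := {fset lat n}.

(* lattice point v lies in the real cone generated by sigma
   (nonnegative rational coefficients suffice for rational cones) *)
Definition inCone n (sigma : cone n) (v : lat n) : Prop :=
  exists a : lat n -> rat, (forall u, 0 <= a u) /\
    map_mx (intr : int -> rat) v
      = \sum_(u <- sigma) a u *: map_mx (intr : int -> rat) u.

Definition inDual n (sigma : cone n) (m : lat n) : Prop :=
  forall u, u \in sigma -> 0 <= pair m u.

Definition perp n (tau : cone n) (m : lat n) : Prop :=
  forall u, u \in tau -> pair m u = 0.

Definition smooth_cone n (sigma : cone n) : Prop :=
  exists B : 'M[int]_n, (\det B = 1 \/ \det B = -1) /\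
    forall u, u \in sigma -> exists i, row i B = u.

(* smooth fan: smooth cones, closed under faces (subsets of generators),
   any two meeting in a common face *)
Definition smooth_fan n (F : {fset cone n}) : Prop :=
  [/\ forall sigma, sigma \in F -> smooth_cone sigma,
      forall sigma tau, sigma \in F -> tau `<=` sigma -> tau \in F &
      forall sigma sigma', sigma \in F -> sigma' \in F ->
        forall v, inCone sigma v -> inCone sigma' v -> inCone (sigma `&` sigma') v].

Definition complete_fan n (F : {fset cone n}) : Prop :=
  forall v : lat n, exists2 sigma, sigma \in F & inCone sigma v.

(* projectivity: existence of a strictly convex support function, given by
   its linear pieces m_sigma on the maximal (n-dimensional) cones *)
Definition projective_fan n (F : {fset cone n}) : Prop :=
  exists msig : cone n -> lat n,
    forall sigma sigma', sigma \in F -> sigma' \in F ->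
      #|` sigma| = n -> #|` sigma'| = n ->
      forall v, inCone sigma' v ->
        pair (msig sigma') v <= pair (msig sigma) v /\
        (pair (msig sigma') v = pair (msig sigma) v <-> inCone sigma v).

Definition smooth_projective_fan n (F : {fset cone n}) : Prop :=
  [/\ smooth_fan F, complete_fan F & projective_fan F].

(* A closed point of X_F over k: a cone tau of F (its orbit O(tau)) together
   with a group homomorphism tau^perp \cap M -> k^*, extended by 0 outside
   tau^perp (so that the representation is canonical). *)
Definition point (k : fieldType) n := (cone n * (lat n -> k))%type.

Definition is_point (k : fieldType) n (F : {fset cone n}) (p : point k n) : Prop :=
  [/\ p.1 \in F,
      forall m, p.2 m != 0 <-> perp p.1 m &
      forall m m', perp p.1 m -> perp p.1 m' -> p.2 (m + m')%R = p.2 m * p.2 m'].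

Definition act (k : fieldType) n (v : lat n) (t : k) (p : point k n) : point k n :=
  (p.1, fun m => t ^ (pair m v) * p.2 m).

(* q = lim_{t -> 0} t^v . p : there is an affine chart U_sigma containing
   p and q such that every coordinate function chi^m (m in sigma^vee)
   along t |-> t^v . p (t <> 0) is a polynomial map t |-> c t^e, whose value
   at t = 0 is the coordinate chi^m of q.  (In U_sigma, the coordinate chi^m
   of a point (tau, gamma), tau a face of sigma, is gamma m.) *)
Definition is_limit (k : fieldType) n (F : {fset cone n}) (v : lat n)
    (p q : point k n) : Prop :=
  exists2 sigma, sigma \in F &
    [/\ p.1 `<=` sigma, q.1 `<=` sigma &
        forall m, inDual sigma m ->
          exists e : nat,
            (forall t : k, t != 0 -> (act v t p).2 m = p.2 m * t ^+ e) /\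
            q.2 m = p.2 m * 0 ^+ e].

(* p is torus-invariant: its orbit is a point, i.e. its cone is maximal *)
Definition torus_fixed (k : fieldType) n (p : point k n) : Prop := #|` p.1| = n.

(* p lies on a torus-invariant curve V(tau), dim tau = n - 1 *)
Definition on_invariant_curve (k : fieldType) n (F : {fset cone n})
    (p : point k n) : Prop :=
  exists2 tau, tau \in F & (#|` tau|.+1 = n)%N /\ tau `<=` p.1.

From HB Require Import structures.
From mathcomp Require Import all_boot all_order all_algebra.
From mathcomp Require Import finmap.
From mathcomp Require Import ring zify.
From Stdlib Require Import FunctionalExtensionality.
Set Implicit Arguments. Unset Strict Implicit. Unset Printing Implicit Defensive.
Import Order.TTheory GRing.Theory Num.Theory.
Local Open Scope fset_scope.
Local Open Scope ring_scope.

(* In the chart of a maximal cone sigma with basis u_1, ..., u_n,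
   t^v . p converges when v has nonnegative coordinates on the u_i outside tau,
   and the limit enlarges tau by the u_i on which v is positive; a point of the
   chart is determined by its character on the dual basis.
   For s large, v = (1, s, ..., s^(n-1)) and v + s^n w have nonzero coordinates,
   read as base-s digits, in the basis of every cone of the fan, w being the sum
   of the rays of the orbit cone of p_i.  The maximal cone sigma_i containing
   v + s^n w then contains the orbit cone of p_i, and the limit of p_i along v
   is the fixed point of sigma_i.  If sigma_1 <> sigma_2 these limits differ;
   otherwise p_1 and p_2 differ at some dual vector u_j^*, and the direction
   sum_(i <> j) u_i, which preserves that coordinate, sends them to the
   invariant curve of the facet of sigma_1 opposite u_j. *)

Section Lattice.
Variable n : nat.
Implicit Types (m u v x w : lat n) (B : 'M[int]_n) (sig tau : cone n).

Lemma pair0l v : pair 0 v = 0.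
Proof. by rewrite /pair big1 // => i _; rewrite mxE mul0r. Qed.

Lemma pairDl m m' v : pair (m + m') v = pair m v + pair m' v.
Proof. by rewrite /pair -big_split; apply: eq_bigr => i _; rewrite mxE mulrDl. Qed.

Lemma pairZl (c : int) m v : pair (c *: m) v = c * pair m v.
Proof. by rewrite /pair mulr_sumr; apply: eq_bigr => i _; rewrite mxE mulrA. Qed.

Lemma pair0r m : pair m 0 = 0.
Proof. by rewrite /pair big1 // => i _; rewrite mxE mulr0. Qed.

Lemma pairDr m u v : pair m (u + v) = pair m u + pair m v.
Proof. by rewrite /pair -big_split; apply: eq_bigr => i _; rewrite mxE mulrDr. Qed.

Lemma pairZr m (c : int) v : pair m (c *: v) = c * pair m v.
Proof. by rewrite /pair mulr_sumr; apply: eq_bigr => i _; rewrite mxE mulrCA. Qed.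

Lemma pair_sumr (I : Type) (r : seq I) (P : pred I) m (f : I -> lat n) :
  pair m (\sum_(i <- r | P i) f i) = \sum_(i <- r | P i) pair m (f i).
Proof. exact: (big_morph (pair m) (pairDr m) (pair0r m)). Qed.

Definition unimod B := \det B = 1 \/ \det B = -1.

Definition gens_in_rows B sig := forall u, u \in sig -> exists i, row i B = u.

Definition cone_basis B sig :=
  [/\ unimod B, gens_in_rows B sig & forall i, row i B \in sig].

Lemma gens_in_rowsS B sig tau : tau `<=` sig -> gens_in_rows B sig -> gens_in_rows B tau.
Proof. by move=> /fsubsetP ts sB u /ts /sB. Qed.

Definition dual B (i : 'I_n) : lat n := \row_k invmx B k i.

Lemma unimod_unitmx B : unimod B -> B \in unitmx.
Proof. by rewrite unitmxE => -[] ->; rewrite ?unitr1 ?unitrN1. Qed.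

Lemma pair_dual_row B i j : unimod B -> pair (dual B i) (row j B) = (j == i)%:R.
Proof.
move=> /unimod_unitmx uB; have := congr1 (fun M : 'M_n => M j i) (mulmxV uB).
by rewrite !mxE => <-; apply: eq_bigr => k _; rewrite !mxE mulrC.
Qed.

Lemma unimod_row_inj B : unimod B -> injective (fun i => row i B).
Proof.
move=> uB i j /= eij; apply/eqP; rewrite eq_sym.
have := pair_dual_row i i uB; rewrite eij pair_dual_row // eqxx.
by case: (j == i) => // /eqP; rewrite eq_sym oner_eq0.
Qed.

Lemma row_coordE B x : unimod B -> x = \sum_i pair (dual B i) x *: row i B.
Proof.
move=> /unimod_unitmx uB.
rewrite -{1}[x]mulmx1 -(mulVmx uB) mulmxA mulmx_sum_row.
apply: eq_bigr => i _; congr (_ *: _); rewrite /pair !mxE.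
by apply: eq_bigr => k _; rewrite !mxE mulrC.
Qed.

Lemma dual_coordE B m : unimod B -> m = \sum_i pair m (row i B) *: dual B i.
Proof.
move=> /unimod_unitmx uB.
rewrite -{1}[m]mulmx1 -trmx1 -(mulVmx uB) trmx_mul mulmxA mulmx_sum_row.
apply: eq_bigr => i _; congr (_ *: _); last by apply/rowP => k; rewrite !mxE.
by rewrite /pair !mxE; apply: eq_bigr => k _; rewrite !mxE.
Qed.

Lemma pair_dual_sum B (c : 'I_n -> int) i : unimod B ->
  pair (dual B i) (\sum_j c j *: row j B) = c i.
Proof.
move=> uB; rewrite pair_sumr (bigD1 i) //= big1 ?addr0.
  by rewrite pairZr pair_dual_row // eqxx mulr1.
by move=> j /negbTE ji; rewrite pairZr pair_dual_row // ji mulr0.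
Qed.

Definition ratlat x : 'rV[rat]_n := map_mx intr x.

Lemma ratlat_sum (I : Type) (r : seq I) (P : pred I) (f : I -> lat n) :
  ratlat (\sum_(i <- r | P i) f i) = \sum_(i <- r | P i) ratlat (f i).
Proof.
by apply/rowP => k; rewrite !mxE !summxE rmorph_sum; apply: eq_bigr => i _; rewrite mxE.
Qed.

Lemma ratlatZ (c : int) x : ratlat (c *: x) = c%:~R *: ratlat x.
Proof. by apply/rowP => k; rewrite !mxE rmorphM. Qed.

Lemma pair_ratlat m x : (pair m x)%:~R = \sum_k (m 0 k)%:~R * ratlat x 0 k :> rat.
Proof. by rewrite /pair rmorph_sum; apply: eq_bigr => k _; rewrite rmorphM mxE. Qed.

Lemma cone_coordE B sig (a : lat n -> rat) x : unimod B -> gens_in_rows B sig ->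
  ratlat x = \sum_(u <- sig) a u *: ratlat u ->
  forall i, (pair (dual B i) x)%:~R = if row i B \in sig then a (row i B) else 0.
Proof.
move=> uB sB Hx i; rewrite pair_ratlat Hx.
under eq_bigr => k _ do rewrite summxE mulr_sumr.
rewrite exchange_big /=.
have term u : u \in sig -> \sum_k (dual B i 0 k)%:~R * (a u *: ratlat u) 0 k
    = if u == row i B then a u else 0.
  move=> us; transitivity (a u * (pair (dual B i) u)%:~R).
    by rewrite pair_ratlat mulr_sumr; apply: eq_bigr => k _; rewrite !mxE mulrCA.
  have [j <-] := sB u us; rewrite pair_dual_row // (inj_eq (unimod_row_inj uB)).
  by case: (j == i); rewrite ?mulr1 ?mulr0.
rewrite (eq_big_seq _ term) -big_mkcond /=; case: ifP => ri.
  exact: (@fbig_pred1_inj _ _ _ _ _ a id sig (row i B) ri (@inj_id _)).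
by rewrite big1_seq // => u /andP[/eqP -> ]; rewrite ri.
Qed.

Lemma ratlat_sum_gens sig :
  ratlat (\sum_(u <- sig) u) = \sum_(u <- sig) 1 *: ratlat u.
Proof. by rewrite ratlat_sum; apply: eq_bigr => u _; rewrite scale1r. Qed.

Lemma inCone_sum sig : inCone sig (\sum_(u <- sig) u).
Proof. by exists (fun _ => 1); split=> //; apply: ratlat_sum_gens. Qed.

Lemma cone_basis_perm B sig :
  cone_basis B sig -> perm_eq sig [seq row i B | i <- enum 'I_n].
Proof.
move=> [uB sB rB]; apply: uniq_perm; first exact: fset_uniq.
  by rewrite map_inj_uniq ?enum_uniq //; exact: unimod_row_inj.
move=> u; apply/idP/mapP => [/sB [j <-]| [j _ ->]]; last exact: rB.
by exists j; rewrite ?mem_enum.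
Qed.

Lemma big_cone_basis (V : nmodType) B sig (f : lat n -> V) : cone_basis B sig ->
  \sum_(u <- sig) f u = \sum_i f (row i B).
Proof. by move=> /cone_basis_perm Bs; rewrite (perm_big _ Bs) big_map big_enum. Qed.

Lemma card_cone_basis B sig : cone_basis B sig -> #|` sig| = n.
Proof. by move=> /cone_basis_perm/perm_size; rewrite size_map size_enum_ord. Qed.

Lemma inCone_cone_basis B sig x : cone_basis B sig ->
  (forall i, 0 <= pair (dual B i) x) -> inCone sig x.
Proof.
move=> Bs x_ge0; have [uB sB rB] := Bs.
pose c i := pair (dual B i) x.
have coef j : \sum_i pair (dual B i) (row j B) * c i = c j.
  rewrite (bigD1 j) //= big1 ?addr0; first by rewrite pair_dual_row // eqxx mul1r.
  by move=> i ij; rewrite pair_dual_row // eq_sym (negbTE ij) mul0r.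
exists (fun u => if u \in sig then (\sum_i pair (dual B i) u * c i)%:~R else 0).
split=> [u|]; first by case: ifP => // /sB [j <-]; rewrite coef ler0z; apply: x_ge0.
rewrite -/(ratlat x) -/(ratlat _) {1}(row_coordE x uB) ratlat_sum (big_cone_basis _ Bs).
by apply: eq_bigr => j _; rewrite rB ratlatZ coef.
Qed.

(* In a basis containing [tau], the sum of the generators of [tau] has all its
   [tau]-coordinates equal to 1, so each generator of [tau] must be one of
   [tau `&` rho]. *)
Lemma smooth_sum_inCone_sub tau rho : smooth_cone tau ->
  inCone (tau `&` rho) (\sum_(u <- tau) u) -> tau `<=` rho.
Proof.
move=> [B [uB sB]] [a [_ Ha]]; have Hsum := ratlat_sum_gens tau.
apply/fsubsetP => u ut; have [j ej] := sB u ut.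
have sB' : gens_in_rows B (tau `&` rho) by move=> w; rewrite in_fsetI => /andP[/sB].
have := cone_coordE uB sB' Ha j; rewrite (cone_coordE uB sB Hsum j) ej ut in_fsetI ut /=.
by case: (u \in rho) => // /eqP; rewrite oner_eq0.
Qed.

Lemma perp_dual B tau i : unimod B -> gens_in_rows B tau ->
  perp tau (dual B i) <-> row i B \notin tau.
Proof.
move=> uB sB; split=> [perp_i|ri u ut].
  by apply/negP => /perp_i; rewrite pair_dual_row // eqxx => /eqP; rewrite oner_eq0.
have [j ej] := sB u ut; rewrite -ej pair_dual_row //.
by case: eqP => // ji; move: ri; rewrite -ji ej ut.
Qed.

Lemma perp_dual_coordE B tau m : unimod B -> gens_in_rows B tau -> perp tau m ->
  m = \sum_(i | row i B \notin tau) pair m (row i B) *: dual B i.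
Proof.
move=> uB sB m_perp; rewrite {1}(dual_coordE m uB) [RHS]big_mkcond /=.
apply: eq_bigr => i _; case: ifP => // /negbFE ri.
by rewrite m_perp // scale0r.
Qed.

End Lattice.

Section Digits.
Variable s : int.
Hypothesis s_gt0 : 0 < s.

Lemma digits_eq0 n (c : 'I_n -> int) (z : int) :
  (forall i, `|c i| < s) -> `|z| < s ->
  \sum_(i < n) c i * s ^+ i + z * s ^+ n = 0 -> z = 0 /\ forall i, c i = 0.
Proof.
elim: n c => [|n IH] c cs zs.
  by rewrite big_ord0 add0r expr0 mulr1 => ->; split=> // -[].
rewrite big_ord_recl expr0 mulr1.
under eq_bigr => i _ do rewrite lift0 exprS mulrCA.
rewrite exprS mulrCA -mulr_sumr -addrA -mulrDr; set R := (X in s * X) => E.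
have R0 : R = 0.
  apply/eqP; apply: contraTT (cs ord0) => R0.
  have -> : c ord0 = - (s * R) by apply/eqP; rewrite -addr_eq0 E.
  by rewrite normrN normrM gtr0_norm // -leNgt ler_pMr // -gtz0_ge1 normr_gt0.
have [z0 c0] := IH (fun i => c (lift ord0 i)) (fun i => cs _) zs R0.
split=> // i; case: (unliftP ord0 i) => [j ->|->]; first exact: c0.
by move: E; rewrite R0 mulr0 addr0.
Qed.

Lemma norm_digits_lt n (c : 'I_n -> int) :
  (forall i, `|c i| < s) -> `|\sum_(i < n) c i * s ^+ i| < s ^+ n.
Proof.
elim: n c => [|n IH] c cs; first by rewrite big_ord0 normr0 expr0.
rewrite big_ord_recr /= exprSr.
have sn_gt0 : 0 < s ^+ n by rewrite exprn_gt0.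
have IHc := IH (fun i => c (widen_ord (leqnSn n) i)) (fun i => cs _).
have top : `|c ord_max| * s ^+ n <= (s - 1) * s ^+ n.
  by rewrite ler_wpM2r ?(ltW sn_gt0) //; have := cs ord_max; lia.
apply: (le_lt_trans (ler_normD _ _)); rewrite normrM (gtr0_norm sn_gt0).
rewrite (_ : s ^+ n * s = s ^+ n + (s - 1) * s ^+ n); last by ring.
exact: ltr_leD.
Qed.

End Digits.

Section Characters.
Variables (k : fieldType) (n : nat) (F : {fset cone n}).
Implicit Types (p : point k n) (m d : lat n) (tau sig : cone n) (B : 'M[int]_n).

Definition perpb tau m := all (fun u => pair m u == 0) tau.

Lemma perpP tau m : reflect (perp tau m) (perpb tau m).
Proof. by apply: (iffP allP) => H u /H /eqP. Qed.

Lemma perp0 tau : perp tau 0.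
Proof. by move=> u _; rewrite pair0l. Qed.

Lemma perpD tau m m' : perp tau m -> perp tau m' -> perp tau (m + m').
Proof. by move=> Hm Hm' u ut; rewrite pairDl Hm // Hm' // addr0. Qed.

Lemma perpS tau tau' m : tau `<=` tau' -> perp tau' m -> perp tau m.
Proof. by move=> /fsubsetP tt' Hm u /tt'/Hm. Qed.

Lemma perpZ tau (c : int) m : perp tau m -> perp tau (c *: m).
Proof. by move=> Hm u ut; rewrite pairZl Hm // mulr0. Qed.

Lemma point_char_eq0 p m : is_point F p -> ~ perp p.1 m -> p.2 m = 0.
Proof.
by move=> [_ nz _] Hm; apply/eqP; apply: contraNT (introN (perpP _ _) Hm) => /nz/perpP.
Qed.

Lemma point_char0 p : is_point F p -> p.2 0 = 1.
Proof.
move=> [_ nz mul]; have nz0 : p.2 0 != 0 by apply/nz/perp0.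
by apply: (mulfI nz0); rewrite -mul ?addr0 ?mulr1 //; apply: perp0.
Qed.

Lemma point_charN p m : is_point F p -> perp p.1 m -> p.2 (- m) = (p.2 m)^-1.
Proof.
move=> pp Hm; have [_ nz mul] := pp; have nzm : p.2 m != 0 by apply/nz.
apply: (mulfI nzm); rewrite mulfV // -mul ?subrr ?(point_char0 pp) //.
by rewrite -scaleN1r; apply: perpZ.
Qed.

Lemma point_charZ p d (c : int) : is_point F p -> perp p.1 d ->
  p.2 (c *: d) = p.2 d ^ c.
Proof.
move=> pp Hd; have [_ _ mul] := pp.
have pos j : p.2 (j%:Z *: d) = p.2 d ^ j.
  elim: j => [|j IH]; first by rewrite scale0r expr0z (point_char0 pp).
  by rewrite intS scalerDl scale1r mul ?IH ?exprSz //; apply: perpZ.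
case: c => j; first exact: pos.
by rewrite NegzE scaleNr point_charN ?pos ?invr_expz //; apply: perpZ.
Qed.

Lemma point_char_sum p (I : finType) (P : pred I) (c : I -> int) (d : I -> lat n) :
  is_point F p -> (forall i, P i -> perp p.1 (d i)) ->
  p.2 (\sum_(i | P i) c i *: d i) = \prod_(i | P i) p.2 (d i) ^ c i.
Proof.
move=> pp Hd; have [_ _ mul] := pp.
pose Q x y := p.2 x = y /\ perp p.1 x.
suff [] : Q (\sum_(i | P i) c i *: d i) (\prod_(i | P i) p.2 (d i) ^ c i) by [].
apply: (big_rec2 Q); first by split; [exact: point_char0 | exact: perp0].
move=> i x y Pi [<- Hx]; have Hdi := Hd i Pi; have Hi := perpZ (c i) Hdi.
by split; [rewrite mul // point_charZ | exact: perpD].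
Qed.

Lemma mem_point_cone p B sig i : is_point F p -> unimod B -> gens_in_rows B sig ->
  p.1 `<=` sig -> (row i B \in p.1) = (p.2 (dual B i) == 0).
Proof.
move=> [_ nz _] uB sB ps; have sBp := gens_in_rowsS ps sB.
apply/idP/idP; apply: contraLR; first by move=> /nz/(perp_dual i uB sBp).
by move=> /(perp_dual i uB sBp)/nz.
Qed.

Lemma point_cone_eq_dual p p' B sig : is_point F p -> is_point F p' ->
  unimod B -> gens_in_rows B sig -> p.1 `<=` sig -> p'.1 `<=` sig ->
  (forall i, p.2 (dual B i) = p'.2 (dual B i)) -> p.1 = p'.1.
Proof.
move=> pp pp' uB sB ps ps' eq_dual; apply/fsetP => u.
case: (boolP (u \in sig)) => [/sB [i <-]|us].
  by rewrite (mem_point_cone i pp uB sB ps) (mem_point_cone i pp' uB sB ps') eq_dual.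
by apply/idP/idP => [/(fsubsetP ps)|/(fsubsetP ps')]; rewrite (negbTE us).
Qed.

(* On [tau^perp] a character is the product of its values on the dual vectors
   [dual B i], [row i B \notin tau], which span [tau^perp]. *)
Lemma point_eq_dual p p' B sig : is_point F p -> is_point F p' ->
  unimod B -> gens_in_rows B sig -> p.1 `<=` sig -> p'.1 `<=` sig ->
  (forall i, p.2 (dual B i) = p'.2 (dual B i)) -> p = p'.
Proof.
move=> pp pp' uB sB ps ps' eq_dual.
have eq_cone := point_cone_eq_dual pp pp' uB sB ps ps' eq_dual.
suff eq_char : p.2 = p'.2.
  move: eq_cone eq_char; case: p {pp ps eq_dual} => ? ?.
  by case: p' {pp' ps'} => ? ? /= -> ->.
have sBp := gens_in_rowsS ps sB; have dual_perp i := (perp_dual i uB sBp).2.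
have dual_perp' i : row i B \notin p.1 -> perp p'.1 (dual B i).
  by rewrite -eq_cone; apply: dual_perp.
apply: functional_extensionality => m; have [m_perp|m_nperp] := perpP p.1 m.
  rewrite (perp_dual_coordE uB sBp m_perp) (point_char_sum _ _ dual_perp) //.
  by rewrite (point_char_sum _ _ dual_perp') //; apply: eq_bigr => i _; rewrite eq_dual.
by rewrite (point_char_eq0 pp m_nperp) (point_char_eq0 pp') // -eq_cone.
Qed.

End Characters.

Section Limit.
Variables (k : fieldType) (n : nat) (sig : cone n) (B : 'M[int]_n) (v : lat n).
Hypothesis sigB : cone_basis B sig.
Implicit Types (p : point k n) (tau : cone n) (m : lat n).

Definition limit_cone tau : cone n :=
  tau `|` [fset row i B | i : 'I_n & 0 < pair (dual B i) v].

(* [lim_{t -> 0} t^v . p] when [v] is nonnegative on the rays of [sig] outside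
   [p.1]: the orbit cone absorbs the rays on which [v] is positive, and the
   character survives only on the smaller [perp]. *)
Definition limit_point p : point k n :=
  (limit_cone p.1, fun m => if perpb (limit_cone p.1) m then p.2 m else 0).

Lemma sub_limit_cone tau : tau `<=` limit_cone tau.
Proof. exact: fsubsetUl. Qed.

Lemma limit_cone_sub tau : tau `<=` sig -> limit_cone tau `<=` sig.
Proof.
have [_ _ rB] := sigB; move=> ts; rewrite fsubUset ts /=.
by apply/fsubsetP => u /imfsetP [i _ ->].
Qed.

Lemma mem_limit_cone_row tau i :
  (row i B \in limit_cone tau) = (row i B \in tau) || (0 < pair (dual B i) v).
Proof.
have [uB _ _] := sigB; rewrite in_fsetU; congr (_ || _).
apply/imfsetP/idP => [[j /= vj /(unimod_row_inj uB) ->] //|vi].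
by exists i.
Qed.

Lemma gens_in_rows_limit_cone tau : tau `<=` sig -> gens_in_rows B (limit_cone tau).
Proof. by have [_ sB _] := sigB; move=> /limit_cone_sub/gens_in_rowsS; apply. Qed.

Section DualCone.
Variables (tau : cone n) (m : lat n).
Hypotheses (m_dual : inDual sig m) (m_perp : perp tau m).
Hypothesis v_ge0 : forall i, row i B \notin tau -> 0 <= pair (dual B i) v.

Let term i := pair (dual B i) v * pair m (row i B).

Let pair_dir : pair m v = \sum_i term i.
Proof.
have [uB _ _] := sigB.
by rewrite {1}(row_coordE v uB) pair_sumr; apply: eq_bigr => i _; rewrite pairZr.
Qed.

Let term_ge0 i : 0 <= term i.
Proof.
have [_ _ rB] := sigB; rewrite /term; case: (boolP (row i B \in tau)) => ri.
  by rewrite m_perp // mulr0.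
by apply: mulr_ge0; [exact: v_ge0 | exact: m_dual].
Qed.

Lemma pair_dir_ge0 : 0 <= pair m v.
Proof. by rewrite pair_dir; apply: sumr_ge0 => i _; apply: term_ge0. Qed.

Lemma perp_limit_cone : perp (limit_cone tau) m <-> pair m v = 0.
Proof.
have terms0 : (forall i, term i = 0) <-> pair m v = 0.
  rewrite pair_dir; split=> [t0|/psumr_eq0P t0 i]; first by rewrite big1.
  by apply: t0 => // j _; apply: term_ge0.
rewrite -terms0; split=> [Lm i|t0 u].
  rewrite /term; case: (ltP 0 (pair (dual B i) v)) => [vi|vi].
    by rewrite Lm ?mulr0 // mem_limit_cone_row vi orbT.
  case: (boolP (row i B \in tau)) => [ri|/v_ge0 vi0]; first by rewrite m_perp ?mulr0.
  have /eqP -> : pair (dual B i) v == 0 by rewrite eq_le vi vi0.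
  by rewrite mul0r.
rewrite in_fsetU => /orP[/m_perp //|/imfsetP [i /= vi ->]].
by have /eqP := t0 i; rewrite mulf_eq0 gt_eqF //= => /eqP.
Qed.

End DualCone.

Lemma limit_cone_full tau : tau `<=` sig ->
  (forall i, row i B \notin tau -> 0 < pair (dual B i) v) -> limit_cone tau = sig.
Proof.
have [_ sB _] := sigB; move=> ts v_gt0; apply/eqP; rewrite eqEfsubset limit_cone_sub //=.
apply/fsubsetP => u /sB [i <-]; rewrite mem_limit_cone_row.
by case: (boolP (_ \in tau)) => //= /v_gt0.
Qed.

Lemma limit_cone_facet tau j : (forall i, i != j -> 0 < pair (dual B i) v) ->
  sig `\ row j B `<=` limit_cone tau.
Proof.
have [_ sB _] := sigB; move=> v_gt0; apply/fsubsetP => u.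
rewrite in_fsetD1 => /andP[uj /sB [i ei]]; rewrite -ei mem_limit_cone_row v_gt0 ?orbT //.
by apply: contraNneq uj => ij; rewrite -ei ij.
Qed.

Variable F : {fset cone n}.
Hypotheses (F_face : forall sigma tau, sigma \in F -> tau `<=` sigma -> tau \in F)
  (sigF : sig \in F).

Lemma is_point_limit p : is_point F p -> p.1 `<=` sig -> is_point F (limit_point p).
Proof.
move=> [_ nz mul] ps; have pL := sub_limit_cone p.1.
split=> /=; first exact: (F_face sigF (limit_cone_sub ps)).
  move=> m; case: (perpP (limit_cone p.1) m) => Lm; last by split=> // /eqP.
  by split=> // _; apply/nz/(perpS pL Lm).
move=> m m' Lm Lm'; have Lmm' := perpD Lm Lm'.
rewrite (introT (perpP _ _) Lm) (introT (perpP _ _) Lm') (introT (perpP _ _) Lmm').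
by apply: mul; apply: perpS pL _.
Qed.

Lemma is_limit_limit p : is_point F p -> p.1 `<=` sig ->
  (forall i, row i B \notin p.1 -> 0 <= pair (dual B i) v) ->
  is_limit F v p (limit_point p).
Proof.
move=> pp ps v_ge0; have [_ nz _] := pp.
exists sig => //; split=> //; first exact: limit_cone_sub.
move=> m m_dual /=; have [p0|/nz m_perp] := eqVneq (p.2 m) 0.
  by exists 0%N; split=> [t _|]; rewrite p0 ?mulr0 ?mul0r //; case: ifP.
have mv_ge0 := pair_dir_ge0 m_dual m_perp v_ge0.
have Lm_iff := perp_limit_cone m_dual m_perp v_ge0.
exists `|pair m v|%N; split=> [t _|].
  by rewrite /act /= -[pair m v]gez0_abs // -exprnP mulrC.
rewrite expr0n absz_eq0; case: (perpP _ m) => [/Lm_iff ->|Ln]; first by rewrite eqxx mulr1.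
by case: eqP => [/Lm_iff //|_]; rewrite mulr0.
Qed.

Lemma limit_point_dual p j : is_point F p -> p.1 `<=` sig -> pair (dual B j) v = 0 ->
  (limit_point p).2 (dual B j) = p.2 (dual B j).
Proof.
move=> pp ps vj; have [uB sB _] := sigB.
have sBL := gens_in_rows_limit_cone ps; have sBp := gens_in_rowsS ps sB.
rewrite /=; case: (perpP _ (dual B j)) => // L_nperp; symmetry.
apply: (point_char_eq0 pp); rewrite (perp_dual j uB sBp) => rj.
by apply/L_nperp/(perp_dual j uB sBL); rewrite mem_limit_cone_row vj ltxx orbF.
Qed.

End Limit.

Lemma fin_bound (I : finType) (f : I -> int) : exists2 s, 0 < s & forall i, `|f i| < s.
Proof.
exists (1 + \sum_i `|f i|) => [|i].
  have : 0 <= \sum_i `|f i| by apply: sumr_ge0.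
  lia.
have : `|f i| <= \sum_j `|f j| by rewrite (bigD1 i) //= lerDl sumr_ge0.
lia.
Qed.

Lemma uniform_bound (T : eqType) (r : seq T) (P : T -> int -> Prop) :
  (forall x s s', s <= s' -> P x s -> P x s') -> (forall x, x \in r -> exists s, P x s) ->
  exists2 s, 0 < s & forall x, x \in r -> P x s.
Proof.
move=> P_mono; elim: r => [|x r IH] Pr; first by exists 1.
have [s s_gt0 Ps] : exists2 s, 0 < s & forall y, y \in r -> P y s.
  by apply: IH => y yr; apply: Pr; rewrite inE yr orbT.
have [s0 Px] := Pr x (mem_head x r).
exists (s + `|s0|) => [|y]; first by have := normr_ge0 s0; lia.
rewrite inE => /orP[/eqP ->|/Ps Py]; first apply: (P_mono _ _ _ _ Px).
  by have := ler_norm s0; have := ltW s_gt0; lia.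
by apply: (P_mono _ _ _ _ Py); have := normr_ge0 s0; lia.
Qed.

Section Generic.
Variable n : nat.
Implicit Types (B : 'M[int]_n) (s : int) (w : lat n) (ws : seq (lat n)).

Definition dual_bounded B s ws :=
  forall i, (forall k, `|dual B i 0 k| < s) /\
            forall w, w \in ws -> `|pair (dual B i) w| < s.

Lemma dual_bounded_le B ws s s' : s <= s' -> dual_bounded B s ws -> dual_bounded B s' ws.
Proof.
move=> ss' bnd i; have [bnd1 bnd2] := bnd i.
by split=> [k|w /bnd2]; [apply: lt_le_trans (bnd1 k) ss' | move/lt_le_trans; apply].
Qed.

Lemma dual_bounded_ex B ws : exists s, dual_bounded B s ws.
Proof.
have [s1 s1_gt0 bnd1] := fin_bound (fun ik : 'I_n * 'I_n => dual B ik.1 0 ik.2).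
have [s2 s2_gt0 bnd2] : exists2 s, 0 < s &
    forall w, w \in ws -> forall i, `|pair (dual B i) w| < s.
  apply: uniform_bound => [w s s' ss' bnd i|w _]; first exact: lt_le_trans (bnd i) ss'.
  by have [s _ bnd] := fin_bound (fun i => pair (dual B i) w); exists s.
exists (s1 + s2) => i; split=> [k|w /bnd2/(_ i) lt2].
  by apply: lt_le_trans (bnd1 (i, k)) _; rewrite lerDl ltW.
by apply: lt_le_trans lt2 _; rewrite lerDr ltW.
Qed.

Definition fan_dual_bounded (F : {fset cone n}) s ws :=
  forall sig, sig \in F ->
    exists B, [/\ unimod B, gens_in_rows B sig & dual_bounded B s ws].

Definition geom_vec s : lat n := \row_k s ^+ k.

Section Shift.
Variables (B : 'M[int]_n) (s : int) (ws : seq (lat n)) (w : lat n).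
Hypotheses (s_gt0 : 0 < s) (uB : unimod B) (bnd : dual_bounded B s ws) (w_ws : w \in ws).

Let x := geom_vec s + s ^+ n *: w.

Let pair_x d : pair d x = \sum_k d 0 k * s ^+ k + pair d w * s ^+ n.
Proof.
rewrite pairDr pairZr mulrC; congr (_ + _).
by apply: eq_bigr => k _; rewrite mxE.
Qed.

Lemma pair_dual_geom_neq0 i : pair (dual B i) x != 0.
Proof.
have [bnd1 bnd2] := bnd i.
apply/eqP; rewrite pair_x => /(digits_eq0 s_gt0 bnd1 (bnd2 w w_ws)) [_ d0].
have /eqP := pair_dual_row i i uB; rewrite eqxx /pair big1 ?oner_eq0 // => k _.
by rewrite d0 mul0r.
Qed.

Lemma pair_dual_geom_gt0 i : 0 < pair (dual B i) x -> 0 <= pair (dual B i) w.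
Proof.
have [bnd1 bnd2] := bnd i; have := norm_digits_lt s_gt0 bnd1.
rewrite pair_x; set D := \sum_k _; have sn_gt0 : 0 < s ^+ n by rewrite exprn_gt0.
move=> D_lt x_gt0; rewrite leNgt; apply/negP => w_lt0.
have : pair (dual B i) w * s ^+ n <= - s ^+ n by rewrite -mulN1r ler_pM2r //; lia.
have := ler_norm D; lia.
Qed.

End Shift.

Lemma pair_geom_shift d s w : pair d w = 0 ->
  pair d (geom_vec s + s ^+ n *: w) = pair d (geom_vec s).
Proof. by move=> dw; rewrite pairDr pairZr dw mulr0 addr0. Qed.

Definition generic_chart (F : {fset cone n}) (tau sig : cone n) B (v : lat n) :=
  [/\ sig \in F, cone_basis B sig, tau `<=` sig &
      forall i, row i B \notin tau -> 0 < pair (dual B i) v].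

(* [x = geom_vec s + s^n w] has nonzero coordinates in every basis, so the cone
   containing [x] is maximal with [x] in its interior; [s^n w] dominates each
   coordinate of [x], so [w] lies in that cone too, hence so does [tau]; off
   [tau] the coordinates of [w] vanish and those of [x] are those of
   [geom_vec s]. *)
Lemma exists_generic_chart F tau s ws : smooth_fan F -> complete_fan F -> tau \in F ->
  0 < s -> \sum_(u <- tau) u \in ws ->
  fan_dual_bounded F s ws ->
  exists sig B, generic_chart F tau sig B (geom_vec s).
Proof.
move=> [Fsm _ Fint] Fc tauF s_gt0 w_ws bounded.
set w := \sum_(u <- tau) u; set x := geom_vec s + s ^+ n *: w.
have [rho rhoF [a [a_ge0 Ha]]] := Fc x.
have [B [uB sB bnd]] := bounded rho rhoF.
have x_coord := cone_coordE uB sB Ha.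
have x_neq0 := pair_dual_geom_neq0 s_gt0 uB bnd w_ws.
have rB i : row i B \in rho.
  apply: contraTT (x_neq0 i) => ri.
  by rewrite negbK -(intr_eq0 rat) x_coord (negbTE ri).
have x_gt0 i : 0 < pair (dual B i) x.
  by rewrite lt_def x_neq0 /= -(ler0z rat) x_coord rB.
have rhoB : cone_basis B rho by [].
have w_rho : inCone rho w.
  by apply: (inCone_cone_basis rhoB) => i; apply: pair_dual_geom_gt0 (x_gt0 i).
have tau_rho : tau `<=` rho.
  exact: smooth_sum_inCone_sub (Fsm _ tauF) (Fint _ _ tauF rhoF w (inCone_sum tau) w_rho).
exists rho, B; split=> // i ri.
have w_i : pair (dual B i) w = 0.
  apply/eqP; rewrite -(intr_eq0 rat).
  by rewrite (cone_coordE uB (gens_in_rowsS tau_rho sB) (ratlat_sum_gens tau)) (negbTE ri).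
by rewrite -(pair_geom_shift s w_i); apply: x_gt0.
Qed.

Lemma smooth_fan_dual_bound F ws :
  smooth_fan F -> exists2 s, 0 < s & fan_dual_bounded F s ws.
Proof.
move=> [Fsm _ _]; apply: uniform_bound.
  by move=> sig s s' ss' [B [uB sB bnd]]; exists B; split=> //; apply: dual_bounded_le bnd.
move=> sig /Fsm [B [uB sB]].
by have [s bnd] := dual_bounded_ex B ws; exists s, B.
Qed.

End Generic.

Section Separation.
Variables (k : fieldType) (n : nat) (F : {fset cone n}).
Hypothesis F_face : forall sigma tau, sigma \in F -> tau `<=` sigma -> tau \in F.
Implicit Types (p q : point k n) (sig : cone n) (B : 'M[int]_n) (v : lat n).

Definition separating_dir p1 p2 v := exists q1 q2 : point k n,
  [/\ is_point F q1, is_point F q2, is_limit F v p1 q1, is_limit F v p2 q2 &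
      [/\ q1 <> q2, torus_fixed q1 \/ on_invariant_curve F q1 &
          torus_fixed q2 \/ on_invariant_curve F q2]].

Lemma on_invariant_curve_facet sig B j q : sig \in F -> cone_basis B sig ->
  sig `\ row j B `<=` q.1 -> on_invariant_curve F q.
Proof.
move=> sigF sigB sub; exists (sig `\ row j B); first exact: F_face sigF (fsubsetDl _ _).
split=> //; have [_ _ rB] := sigB.
by have := cardfsD1 (row j B) sig; rewrite rB (card_cone_basis sigB) add1n.
Qed.

Lemma separating_distinct_charts p1 p2 sig1 sig2 B1 B2 v :
  is_point F p1 -> is_point F p2 -> sig1 != sig2 ->
  generic_chart F p1.1 sig1 B1 v -> generic_chart F p2.1 sig2 B2 v ->
  separating_dir p1 p2 v.
Proof.
move=> pp1 pp2 sig12 [sig1F B1sig1 p1sig1 v1] [sig2F B2sig2 p2sig2 v2].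
have q1E := limit_cone_full B1sig1 p1sig1 v1; have q2E := limit_cone_full B2sig2 p2sig2 v2.
exists (limit_point B1 v p1), (limit_point B2 v p2); split.
- exact: (is_point_limit v B1sig1 F_face sig1F pp1 p1sig1).
- exact: (is_point_limit v B2sig2 F_face sig2F pp2 p2sig2).
- by apply: (is_limit_limit B1sig1 sig1F pp1 p1sig1) => i /v1/ltW.
- by apply: (is_limit_limit B2sig2 sig2F pp2 p2sig2) => i /v2/ltW.
split; first by move=> /(congr1 fst) /=; rewrite q1E q2E; apply/eqP.
  by left; rewrite /torus_fixed /= q1E (card_cone_basis B1sig1).
by left; rewrite /torus_fixed /= q2E (card_cone_basis B2sig2).
Qed.

Lemma separating_common_chart p1 p2 sig B : sig \in F -> cone_basis B sig ->
  is_point F p1 -> is_point F p2 -> p1.1 `<=` sig -> p2.1 `<=` sig -> p1 <> p2 ->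
  exists v, separating_dir p1 p2 v.
Proof.
move=> sigF sigB pp1 pp2 p1sig p2sig p12; have [uB sB _] := sigB.
have [j pj] : exists j, p1.2 (dual B j) != p2.2 (dual B j).
  apply/existsP; apply: contra_notT p12; rewrite negb_exists => /forallP eq_dual.
  by apply: (point_eq_dual pp1 pp2 uB sB) => // i; apply/eqP/negPn.
pose v := \sum_i (i != j)%:R *: row i B.
have vE i : pair (dual B i) v = (i != j)%:R by apply: pair_dual_sum.
have v_ge0 (tau : cone n) i : row i B \notin tau -> 0 <= pair (dual B i) v.
  by rewrite vE ler0n.
have v_gt0 i : i != j -> 0 < pair (dual B i) v by rewrite vE => ->.
have vj : pair (dual B j) v = 0 by rewrite vE eqxx.
exists v, (limit_point B v p1), (limit_point B v p2); split.
- exact: (is_point_limit v sigB F_face sigF pp1 p1sig).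
- exact: (is_point_limit v sigB F_face sigF pp2 p2sig).
- exact: (is_limit_limit sigB sigF pp1 p1sig (v_ge0 p1.1)).
- exact: (is_limit_limit sigB sigF pp2 p2sig (v_ge0 p2.1)).
split; last 2 first.
- right; apply: (on_invariant_curve_facet sigF sigB).
  exact: (limit_cone_facet sigB _ v_gt0).
- right; apply: (on_invariant_curve_facet sigF sigB).
  exact: (limit_cone_facet sigB _ v_gt0).
move=> q12; move: pj; rewrite -(limit_point_dual sigB pp1 p1sig vj).
by rewrite -(limit_point_dual sigB pp2 p2sig vj) q12 eqxx.
Qed.

End Separation.

Theorem lemma3p2 (k : closedFieldType) (n : nat) (F : {fset cone n})
    (p1 p2 : point k n) :
  smooth_projective_fan F ->
  is_point F p1 -> is_point F p2 -> p1 <> p2 ->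
  exists v : lat n, exists q1 q2 : point k n,
    [/\ is_point F q1, is_point F q2,
        is_limit F v p1 q1, is_limit F v p2 q2 &
        [/\ q1 <> q2,
            torus_fixed q1 \/ on_invariant_curve F q1 &
            torus_fixed q2 \/ on_invariant_curve F q2]].
Proof.
move=> [Fsmooth Fc _] pp1 pp2 p12; have [_ F_face _] := Fsmooth.
pose ws := [:: \sum_(u <- p1.1) u; \sum_(u <- p2.1) u].
have [s s_gt0 bounded] := smooth_fan_dual_bound ws Fsmooth.
have [p1F _ _] := pp1; have [p2F _ _] := pp2.
have [sig1 [B1 chart1]] := exists_generic_chart Fsmooth Fc p1F s_gt0 (mem_head _ _) bounded.
have [sig2 [B2 chart2]] : exists sig B, generic_chart F p2.1 sig B (geom_vec n s).
  by apply: exists_generic_chart Fsmooth Fc p2F s_gt0 _ bounded; rewrite !inE eqxx orbT.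
have [sig12|sig12] := eqVneq sig1 sig2; last first.
  by exists (geom_vec n s); apply: separating_distinct_charts chart1 chart2.
subst sig2; have [sig1F B1sig1 p1sig1 _] := chart1; have [_ _ p2sig1 _] := chart2.
exact: (separating_common_chart F_face sig1F B1sig1 pp1 pp2 p1sig1 p2sig1 p12).
Qed.
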